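(* Let $\mathfrak g$ be a Lie algebra and $V$ a $\mathfrak g$-module with action $x\cdot u$. Set $\mathbb U_0=\mathfrak g$ (degree 0), $\mathbb U_1=V[-1]$ ($V$ placed in degree 1, odd), and recursively $\mathbb U_{-p+1}=\mathrm{Hom}(\mathbb U_1,\mathbb U_{-p+2})$ for $p\ge2$ (so $\mathbb U_{-1}=\mathrm{Hom}(\mathbb U_1,\mathfrak g)$). Writing $x(u)=x\cdot u$ for $x\in\mathfrak g$, $u\in\mathbb U_1$, define brackets on $\mathbb U_{1-}=\bigoplus_{k\le1}\mathbb U_k$ (for pairs of degrees summing to $\le1$) by the Lie bracket of $\mathfrak g$ on $\mathfrak g\otimes\mathfrak g$ and recursively by $[x,u]=x(u)$, $[u,x]=-(-1)^{|x|}x(u)$, $[x,y](u)=[x,y(u)]+(-1)^{|y|}[x(u),y]$ for $x,y\in\mathbb U_{0-}$ and $u\in\mathbb U_1$. Then $\mathbb U_{1-}$ is a semilocal Lie superalgebra. In particular, for $x\in\mathfrak g$ and $\phi\in\mathbb U_{-1}$, $[x,\phi](u)=[x,\phi(u)]-\phi(x\cdot u)$.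
   Context: All vector spaces are over $\mathbb{K}=\mathbb{R}$ or $\mathbb{C}$, $\mathbb{Z}$-graded, parity equal to degree mod 2; $|x|$ is the degree. A semilocal Lie superalgebra is a graded space concentrated in degrees $\le1$ with bilinear brackets $A_i\otimes A_j\to A_{i+j}$ defined whenever $i+j\le 1$, satisfying $[x,y]=-(-1)^{|x||y|}[y,x]$ and $[x,[y,z]]-(-1)^{|x||y|}[y,[x,z]]=[[x,y],z]$ whenever all brackets involved are defined. *)

From mathcomp Require Import all_boot all_order all_algebra.
Set Implicit Arguments.
Unset Strict Implicit.
Unset Printing Implicit Defensive.
Import GRing.Theory Num.Theory.
Local Open Scope ring_scope.

Definition lie_algebra (K : numFieldType) (G : lmodType K)
    (lb : G -> G -> G) : Prop :=
  [/\ (forall (c : K) x y z, lb (c *: x + y) z = c *: lb x z + lb y z),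
      (forall (c : K) x y z, lb x (c *: y + z) = c *: lb x y + lb x z),
      (forall x, lb x x = 0) &
      (forall x y z, lb x (lb y z) + lb y (lb z x) + lb z (lb x y) = 0)].

Definition lie_module (K : numFieldType) (G V : lmodType K)
    (lb : G -> G -> G) (act : G -> V -> V) : Prop :=
  [/\ (forall (c : K) x y v, act (c *: x + y) v = c *: act x v + act y v),
      (forall (c : K) x u v, act x (c *: u + v) = c *: act x u + act x v) &
      (forall x y v, act (lb x y) v = act x (act y v) - act y (act x v))].

Definition sgn (K : numFieldType) (b : nat) : K := (-1) ^+ b.

(* Degrees are <= 1; we index them by n : nat, the component of index *)
(* n being the component of degree 1 - n.  Hence an element of index  *)
(* n is odd iff n is even.  All homogeneous components are carved out *)
(* of one ambient carrier A (with its linear operations) by the       *)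
(* predicate [hom n].  br n m x y is the bracket A_{1-n} x A_{1-m} ->  *)
(* A_{2-n-m}, relevant only when (1-n)+(1-m) <= 1, i.e. 1 <= n + m.    *)

Definition semilocal_lie_superalgebra (K : numFieldType) (A : Type)
    (zero : A) (add : A -> A -> A) (scale : K -> A -> A)
    (hom : nat -> A -> Prop) (br : nat -> nat -> A -> A -> A) : Prop :=
  (forall n, hom n zero) /\
  (forall n (c : K) x y, hom n x -> hom n y -> hom n (add (scale c x) y)) /\
  (forall n m x y, (1 <= n + m)%N -> hom n x -> hom m y ->
     hom (n + m).-1 (br n m x y)) /\
  (forall n m (c : K) x1 x2 y, (1 <= n + m)%N ->
     hom n x1 -> hom n x2 -> hom m y ->
     br n m (add (scale c x1) x2) y = add (scale c (br n m x1 y)) (br n m x2 y)) /\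
  (forall n m (c : K) x y1 y2, (1 <= n + m)%N ->
     hom n x -> hom m y1 -> hom m y2 ->
     br n m x (add (scale c y1) y2) = add (scale c (br n m x y1)) (br n m x y2)) /\
  (forall n m x y, (1 <= n + m)%N -> hom n x -> hom m y ->
     br n m x y = scale (- sgn K (~~ odd n && ~~ odd m)) (br m n y x)) /\
  (* super Jacobi: [x,[y,z]] - (-1)^{|x||y|} [y,[x,z]] = [[x,y],z],
     whenever all six brackets are defined *)
  (forall n m k x y z,
     (1 <= n + m)%N -> (1 <= m + k)%N -> (1 <= n + k)%N -> (2 <= n + m + k)%N ->
     hom n x -> hom m y -> hom k z ->
     add (br n (m + k).-1 x (br m k y z))
         (scale (- sgn K (~~ odd n && ~~ odd m)) (br m (n + k).-1 y (br n k x z)))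
     = br (n + m).-1 k (br n m x y) z).

(* the canonical (currying) identification of U_{-p} = Hom(V,Hom(V,.. *)
(* Hom(V,g))) with p-multilinear maps V^p -> g, represented as maps   *)
(* f : seq V -> G that vanish on lists of length <> p and are linear  *)
(* in each slot; phi(u) corresponds to (fun s => phi (u :: s)).        *)

Section Construction.
Variables (K : numFieldType) (G V : lmodType K).
Variables (lb : G -> G -> G) (act : G -> V -> V).

Definition T := (V * (seq V -> G))%type.
Definition tzero : T := (0, fun _ => 0).
Definition tadd (a b : T) : T := (a.1 + b.1, fun s => a.2 s + b.2 s).
Definition tscale (c : K) (a : T) : T := (c *: a.1, fun s => c *: a.2 s).

Definition mlin (f : seq V -> G) : Prop :=
  forall (s1 s2 : seq V) (c : K) (u v : V),
    f (s1 ++ (c *: u + v) :: s2) = c *: f (s1 ++ u :: s2) + f (s1 ++ v :: s2).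

Definition uhom (n : nat) (t : T) : Prop :=
  match n with
  | 0 => t.2 = (fun _ => 0)
  | p.+1 => [/\ t.1 = 0, (forall s, size s != p -> t.2 s = 0) & mlin t.2]
  end.

(* evaluation x(u) for x in U_{-p} (index p.+1), u in U_1:
   x(u) = x . u if p = 0, and the partial application otherwise *)
Definition ev (p : nat) (t : T) (u : V) : T :=
  match p with
  | 0 => (act (t.2 [::]) u, fun _ => 0)
  | _.+1 => (0, fun s => t.2 (u :: s))
  end.

(* Values of [x,y] for x in U_{-p}, y in U_{-q} (p, q >= 0), at the
   argument list s, following the recursion
   [x,y](u) = [x, y(u)] + (-1)^{|y|} [x(u), y],
   with [x,v] = x(v), [v,y] = -(-1)^{|y|} y(v) for v in U_1, and the
   Lie bracket of g on g (x) g. *)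
Fixpoint bnn (p q : nat) (x y : seq V -> G) (s : seq V) {struct s} : G :=
  match s with
  | [::] => lb (x [::]) (y [::])
  | u :: s' =>
      (match q with
       | 0 => x (act (y [::]) u :: s')                 (* [x, y.u] = x(y.u) *)
       | q'.+1 => bnn p q' x (fun t => y (u :: t)) s'
       end)
      + sgn K q *:
      (match p with
       | 0 => - sgn K q *: y (act (x [::]) u :: s')   (* [x.u, y] *)
       | p'.+1 => bnn p' q (fun t => x (u :: t)) y s'
       end)
  end.

Definition ubr (n m : nat) (x y : T) : T :=
  match n, m with
  | 0, 0 => tzero                                   (* undefined: junk *)
  | 0, q.+1 => tscale (- sgn K q) (ev q y x.1)
  | p.+1, 0 => ev p x y.1
  | p.+1, q.+1 =>
      (0, fun s => if size s == (p + q)%N then bnn p q x.2 y.2 s else 0)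
  end.

End Construction.

(* For the super-Jacobi identity, let J(x,y,z) be the Jacobiator.
   If one argument lies in U_1 = V, then J vanishes by the defining recursion
   [x,y](u) = [x,y(u)] + (-1)^|y| [x(u),y] and antisymmetry.  Otherwise J(x,y,z) has
   degree <= -1, so it is determined by its values at u in V, and the recursion makes
   evaluation at u a derivation:
     J(x,y,z)(u) = J(x,y,z(u)) +- J(x,y(u),z) +- J(x(u),y,z).
   Every term on the right has smaller total degree, so induction reduces the identity
   to x, y, z in g, where it is the Jacobi identity of g. *)

From mathcomp Require Import all_boot all_order all_algebra.
From mathcomp Require Import boolp functions.
From mathcomp Require Import ring zify.
Import GRing.Theory Num.Theory.
Local Open Scope ring_scope.

Set Implicit Arguments.
Unset Strict Implicit.
Unset Printing Implicit Defensive.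

Section LinearFor.
Variables (R : pzRingType) (U W : lmodType R) (f : U -> W).
Hypothesis f_linear : linear f.

Lemma linear_forB x y : f (x - y) = f x - f y.
Proof. exact: zmod_morphism_linear. Qed.

Lemma linear_for0 : f 0 = 0.
Proof. by rewrite -(subrr 0) linear_forB subrr. Qed.

Lemma linear_forD x y : f (x + y) = f x + f y.
Proof. by rewrite -{1}[y]opprK linear_forB -sub0r linear_forB linear_for0 sub0r opprK. Qed.

Lemma linear_forZ c x : f (c *: x) = c *: f x.
Proof. by have := f_linear c x 0; rewrite !addr0 linear_for0 addr0. Qed.

End LinearFor.

Section Lincomb.
Variables (R : comPzRingType) (W : lmodType R).

Lemma lincombDZ (r r1 r2 l l1 l2 : W) (c e : R) :
  r = c *: r1 + r2 -> l = c *: l1 + l2 ->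
  r + e *: l = c *: (r1 + e *: l1) + (r2 + e *: l2).
Proof.
move=> -> ->; rewrite !scalerDr !scalerA mulrC -scalerA.
by rewrite addrACA.
Qed.

Lemma lincomb2_eq0 (A B : W) (a b c d : R) :
  a + c = 0 -> a * b + d = 0 -> a *: (A + b *: B) + c *: A + d *: B = 0.
Proof.
move=> hac hbd; rewrite scalerDr !scalerA (addrAC (a *: A)) -scalerDl hac scale0r add0r.
by rewrite -scalerDl hbd scale0r.
Qed.

(* Regroups the nine terms of an evaluated Jacobiator into three Jacobiators. *)
Lemma lincomb_regroup3 (a1 a2 a3 b1 b2 b3 c1 c2 c3 : W)
    (e e' e'' sr sq sqr spr : R) :
  e * spr = sr * e' -> e * sr = sqr * e'' -> sr * sq = sqr ->
  (a1 + sr *: a2 + sqr *: a3) + e *: (b1 + sr *: b2 + spr *: b3)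
    - (c1 + sr *: (c2 + sq *: c3)) =
  (a1 + e *: b1 - c1) + sr *: (a2 + e' *: b3 - c2) + sqr *: (a3 + e'' *: b2 - c3).
Proof.
move=> h1 h2 h3; rewrite !scalerDr !scalerN !scalerA h1 h2 h3.
have sum3 (a b c a' b' c' : W) :
    a + b + c + (a' + b' + c') = (a + a') + (b + b') + (c + c').
  by rewrite addrACA (addrACA a).
by rewrite (addrAC (e *: b1)) sum3 !opprD [- c1 + _]addrA sum3.
Qed.

End Lincomb.

Lemma sgnE (K : numFieldType) n : sgn K n = if odd n then -1 else 1.
Proof. by rewrite /sgn -signr_odd; case: (odd n). Qed.

Lemma sgn_bool (K : numFieldType) (b : bool) : sgn K b = if b then -1 else 1.
Proof. by case: b. Qed.

Ltac sign_ring := rewrite ?sgn_bool ?sgnE /= ?oddD ?oddM ?negbK /=;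
  repeat match goal with |- context [odd ?n] => case: (odd n) end; rewrite /=; ring.

Section Construction.
Variables (K : numFieldType) (G V : lmodType K).
Variables (lb : G -> G -> G) (act : G -> V -> V).
Hypothesis lb_lie : lie_algebra lb.
Hypothesis act_module : lie_module lb act.

Lemma lb_linearl z : linear (lb ^~ z).
Proof. by case: lb_lie => h _ _ _ c x y; apply: h. Qed.

Lemma lb_linearr z : linear (lb z).
Proof. by case: lb_lie => _ h _ _ c x y; apply: h. Qed.

Lemma lb_antisym x y : lb x y = - lb y x.
Proof.
case: lb_lie => _ _ lbxx _; apply/eqP; rewrite -addr_eq0.
have := lbxx (x + y).
rewrite (linear_forD (lb_linearl _)) !(linear_forD (lb_linearr _)) !lbxx.
by rewrite add0r addr0 => ->.
Qed.

Lemma lb_jacobi x y z : lb x (lb y z) - lb y (lb x z) = lb (lb x y) z.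
Proof.
case: lb_lie => _ _ _ jac; apply/eqP; rewrite -subr_eq0 -(jac x y z).
rewrite (lb_antisym z x) (lb_antisym (lb x y) z).
by rewrite -[- lb x z]scaleN1r (linear_forZ (lb_linearr _)) scaleN1r !opprK.
Qed.

Lemma mlin_cons (Y : seq V -> G) u : mlin Y -> mlin (fun t => Y (u :: t)).
Proof. by move=> hY s1; apply: (hY (u :: s1)). Qed.

Lemma mlin_head (Y : seq V -> G) s c a b : mlin Y ->
  Y ((c *: a + b) :: s) = c *: Y (a :: s) + Y (b :: s).
Proof. by move=> hY; apply: (hY [::]). Qed.

Local Notation bnn := (bnn lb act).

Lemma bnn_linearl s : forall p q (X1 X2 Y : seq V -> G) c, mlin Y ->
  bnn p q (fun t => c *: X1 t + X2 t) Y s = c *: bnn p q X1 Y s + bnn p q X2 Y s.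
Proof.
elim: s => [|u s IH] p q X1 X2 Y c hY /=; first by case: lb_lie => h _ _ _.
apply: lincombDZ; first by case: q => [|q] //; rewrite IH //; apply: mlin_cons.
case: p => [|p]; last by rewrite IH.
by case: act_module => h _ _; rewrite h mlin_head // scalerDr !scalerA mulrC.
Qed.

Lemma bnn_linearr s : forall p q (X Y1 Y2 : seq V -> G) c, mlin X ->
  bnn p q X (fun t => c *: Y1 t + Y2 t) s = c *: bnn p q X Y1 s + bnn p q X Y2 s.
Proof.
elim: s => [|u s IH] p q X Y1 Y2 c hX /=; first by case: lb_lie => _ h _ _.
apply: lincombDZ.
  by case: q => [|q]; [case: act_module => h _ _; rewrite h mlin_head | rewrite IH].
case: p => [|p]; last by rewrite IH //; apply: mlin_cons.
by rewrite scalerDr !scalerA mulrC.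
Qed.

Lemma bnn_mlin p q (X Y : seq V -> G) : mlin X -> mlin Y -> mlin (bnn p q X Y).
Proof.
move=> hX hY s1; elim: s1 p q X Y hX hY => [|w s1 IH] p q X Y hX hY s2 c a b /=.
  have headY : (fun t => Y ((c *: a + b) :: t)) =
                (fun t => c *: Y (a :: t) + Y (b :: t)).
    by apply/funext => t; apply: mlin_head.
  have headX : (fun t => X ((c *: a + b) :: t)) =
                (fun t => c *: X (a :: t) + X (b :: t)).
    by apply/funext => t; apply: mlin_head.
  apply: lincombDZ.
    case: q => [|q]; last by rewrite headY bnn_linearr.
    by case: act_module => _ h _; rewrite h mlin_head.
  case: p => [|p]; last by rewrite headX bnn_linearl.
  by case: act_module => _ h _; rewrite h mlin_head // scalerDr !scalerA mulrC.
apply: lincombDZ.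
  by case: q => [|q]; [apply: (hX (_ :: s1)) | rewrite IH //; apply: mlin_cons].
case: p => [|p]; last by rewrite IH //; apply: mlin_cons.
by rewrite (hY (_ :: s1)) scalerDr !scalerA mulrC.
Qed.

Lemma bnn_antisym s : forall p q (X Y : seq V -> G), size s = (p + q)%N ->
  bnn p q X Y s = - sgn K (p * q) *: bnn q p Y X s.
Proof.
elim: s => [|u s IH] [|p] [|q] X Y //= hs; try lia.
- by rewrite lb_antisym /sgn expr0 scaleN1r.
- rewrite (IH 0 q); try lia.
  rewrite -[Y _]scale1r !scalerDr !scalerA addrC.
  by congr (_ *: _ + _ *: _); sign_ring.
- rewrite [bnn 0 p _ _ s](IH 0 p); try lia.
  rewrite -[X _]scale1r !scalerDr !scalerA [RHS]addrC.
  by congr (_ *: _ + _ *: _); sign_ring.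
- rewrite (IH p.+1 q) ?[bnn q.+1 p _ _ s](IH q.+1 p); try lia.
  rewrite !scalerDr !scalerA addrC.
  by congr (_ *: _ + _ *: _); sign_ring.
Qed.

Local Notation TT := (T G V).
Local Notation hom := (@uhom K G V).
Local Notation ev := (ev act).
Local Notation br := (ubr lb act).

Lemma T_ext (a b : TT) : a.1 = b.1 -> a.2 =1 b.2 -> a = b.
Proof. by case: a b => [a1 a2] [b1 b2] /= -> /funext ->. Qed.

Lemma addTE (a b : TT) : a + b = (a.1 + b.1, fun s => a.2 s + b.2 s).
Proof. by []. Qed.

Lemma scaleTE c (a : TT) : c *: a = (c *: a.1, fun s => c *: a.2 s).
Proof. by []. Qed.

Lemma uhom0 n : hom n 0.
Proof. by case: n => [|n] //; split=> // s1 s2 c u v; rewrite scaler0 addr0. Qed.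

Lemma uhom_lincomb n c (a b : TT) : hom n a -> hom n b -> hom n (c *: a + b).
Proof.
rewrite addTE scaleTE; case: n => [|n] /=; last move=> [a1 a2 a3] [b1 b2 b3].
  by move=> -> ->; apply/funext => s; rewrite scaler0 addr0.
split=> [|s hs|s1 s2 d u v]; first by rewrite a1 b1 scaler0 addr0.
  by rewrite a2 // b2 // scaler0 addr0.
by rewrite a3 b3 !scalerDr !scalerA mulrC addrACA.
Qed.

Lemma ev_linear p u : linear (fun t : TT => ev p t u).
Proof.
move=> c a b; apply: T_ext => [|s]; case: p => [|p] /=; rewrite ?scaler0 ?addr0 //.
by case: act_module => h _ _; apply: h.
Qed.

Lemma ev_linear_arg p (y : TT) : hom p.+1 y -> linear (ev p y).
Proof.
move=> hy c a b; apply: T_ext => [|s]; case: p hy => [|p] /= hy;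
  rewrite ?scaler0 ?addr0 //.
- by case: act_module => _ h _; apply: h.
- by case: hy => _ _ /mlin_head ->.
Qed.

Lemma uhom_ev p (x : TT) u : hom p.+1 x -> hom p (ev p x u).
Proof.
by case: p => [|p] //= [_ x2 x3]; split=> // [s hs|]; [rewrite x2 | apply: mlin_cons].
Qed.

Lemma ubrS0 p (x y : TT) : br p.+1 0 x y = ev p x y.1.
Proof. by []. Qed.

Lemma ubr0S q (x y : TT) : br 0 q.+1 x y = - sgn K q *: ev q y x.1.
Proof. by []. Qed.

Lemma uhom_ubr N n m (x y : TT) : (n + m).-1 = N -> (1 <= n + m)%N ->
  hom n x -> hom m y -> hom N (br n m x y).
Proof.
move=> <-; case: n => [|p]; case: m => [|q] // _ hx hy.
- by rewrite ubr0S -[_ *: _]addr0; apply: uhom_lincomb (uhom0 _); apply: uhom_ev.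
- by rewrite addn0 ubrS0; apply: uhom_ev.
rewrite addnS /=; split=> // [s /negbTE -> //|s1 s2 c u v].
rewrite !size_cat /=; case: eqP => _; last by rewrite scaler0 addr0.
by case: hx hy => _ _ hx [_ _ hy]; apply: bnn_mlin.
Qed.

Lemma ubr_linearl n m (y : TT) : hom m y -> linear (br n m ^~ y).
Proof.
move=> hy c a b; case: n => [|p]; case: m hy => [|q] hy.
- by rewrite /= scaler0 addr0.
- by rewrite !ubr0S (ev_linear_arg hy) scalerDr !scalerA mulrC.
- exact: ev_linear.
apply: T_ext => [|s]; rewrite !addTE !scaleTE /=; first by rewrite scaler0 addr0.
case: eqP => _; last by rewrite scaler0 addr0.
by apply: bnn_linearl; case: hy.
Qed.

Lemma ubr_linearr n m (x : TT) : hom n x -> linear (br n m x).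
Proof.
move=> hx c a b; case: n hx => [|p] hx; case: m => [|q].
- by rewrite /= scaler0 addr0.
- by rewrite !ubr0S (ev_linear q) scalerDr !scalerA mulrC.
- by rewrite !ubrS0 (ev_linear_arg hx).
apply: T_ext => [|s]; rewrite !addTE !scaleTE /=; first by rewrite scaler0 addr0.
case: eqP => _; last by rewrite scaler0 addr0.
by apply: bnn_linearr; case: hx.
Qed.

Lemma ubr_antisym n m (x y : TT) :
  br n m x y = - sgn K (~~ odd n && ~~ odd m) *: br m n y x.
Proof.
case: n => [|p]; case: m => [|q].
- by rewrite /= scaler0.
- by rewrite ubr0S ubrS0; congr (_ *: _); sign_ring.
- by rewrite ubr0S ubrS0 scalerA -[LHS]scale1r; congr (_ *: _); sign_ring.
apply: T_ext => [|s]; rewrite scaleTE /=; first by rewrite scaler0.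
rewrite addnC; case: eqP => [/eqP hs|]; last by rewrite scaler0.
rewrite bnn_antisym; last by rewrite addnC; apply/eqP.
by congr (_ *: _); sign_ring.
Qed.

Lemma ubr_recursion N p q (x y u : TT) : N = (p + q)%N -> hom p.+1 x -> hom q.+1 y ->
  br N.+1 0 (br p.+1 q.+1 x y) u =
  br p.+1 q x (br q.+1 0 y u) + sgn K q *: br p q.+1 (br p.+1 0 x u) y.
Proof.
move=> ->; case: p => [|p]; case: q => [|q] hx hy; apply: T_ext => [|s];
  rewrite addTE scaleTE /= ?addn0 ?addnS ?addSn ?scaler0 ?addr0 //.
- by case: act_module => _ _ ->; rewrite /sgn expr0 scale1r scaleN1r.
- rewrite eqSS; case: eqP => // hs; case: hy => _ hy _.
  by rewrite hy ?scaler0 ?addr0 //= eqSS; apply/eqP.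
- rewrite eqSS; case: eqP => // hs; case: hx => _ hx _.
  by rewrite hx ?scaler0 ?addr0 //= eqSS; apply/eqP.
- by rewrite !eqSS; case: eqP => //; rewrite scaler0 addr0.
Qed.

Lemma ubrDl n m (a b y : TT) : hom m y -> br n m (a + b) y = br n m a y + br n m b y.
Proof. by move/(ubr_linearl n)/linear_forD. Qed.

Lemma ubrBl n m (a b y : TT) : hom m y -> br n m (a - b) y = br n m a y - br n m b y.
Proof. by move/(ubr_linearl n)/linear_forB. Qed.

Lemma ubrZl n m c (a y : TT) : hom m y -> br n m (c *: a) y = c *: br n m a y.
Proof. by move/(ubr_linearl n)/linear_forZ. Qed.

Lemma ubrDr n m (x a b : TT) : hom n x -> br n m x (a + b) = br n m x a + br n m x b.
Proof. by move/(ubr_linearr m)/linear_forD. Qed.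

Lemma ubrZr n m c (x a : TT) : hom n x -> br n m x (c *: a) = c *: br n m x a.
Proof. by move/(ubr_linearr m)/linear_forZ. Qed.

Arguments ubr : simpl never.

Definition jacobiator n m k (x y z : TT) : TT :=
  br n (m + k).-1 x (br m k y z) +
  (- sgn K (~~ odd n && ~~ odd m)) *: br m (n + k).-1 y (br n k x z) -
  br (n + m).-1 k (br n m x y) z.

Lemma jacobiator_SS0 p q (x y u : TT) : hom p.+1 x -> hom q.+1 y ->
  jacobiator p.+1 q.+1 0 x y u = 0.
Proof.
move=> hx hy; rewrite /jacobiator !addn0 addSn addnS /=.
rewrite ubr_recursion // (ubr_antisym q.+1 p y) scalerA opprD addrACA subrr add0r.
by rewrite -scalerBl [_ - _](_ : _ = 0) ?scale0r //; sign_ring.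
Qed.

Lemma jacobiator_0SS q r (u y z : TT) : hom q.+1 y -> hom r.+1 z ->
  jacobiator 0 q.+1 r.+1 u y z = 0.
Proof.
move=> hy hz; rewrite /jacobiator !add0n addSn addnS /=.
rewrite !ubr0S -ubrS0 ubr_recursion //.
rewrite ubrZr // ubrZl // -!ubrS0.
by rewrite scalerA -scaleNr; apply: lincomb2_eq0; sign_ring.
Qed.

Lemma jacobiator_S0S p r (x u z : TT) : hom p.+1 x -> hom r.+1 z ->
  jacobiator p.+1 0 r.+1 x u z = 0.
Proof.
move=> hx hz; rewrite /jacobiator add0n addn0 addSn addnS /=.
rewrite !ubr0S ubrZr // -[ev (p + r) _ _]ubrS0.
rewrite ubr_recursion // -!ubrS0 scalerA (addrC (_ *: br _ _ _ _)) -scaleN1r.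
by apply: lincomb2_eq0; sign_ring.
Qed.

Lemma jacobiatorSSSE p q r (x y z : TT) : jacobiator p.+1 q.+1 r.+1 x y z =
  br p.+1 (q + r).+1 x (br q.+1 r.+1 y z) +
  (- sgn K (~~ odd p.+1 && ~~ odd q.+1)) *: br q.+1 (p + r).+1 y (br p.+1 r.+1 x z) -
  br (p + q).+1 r.+1 (br p.+1 q.+1 x y) z.
Proof. by rewrite /jacobiator !addSn !addnS. Qed.

Ltac uhom_ubr_tac := solve [repeat first [done | lia | apply: uhom_ubr]].

Lemma uhom_jacobiator p q r (x y z : TT) : hom p.+1 x -> hom q.+1 y -> hom r.+1 z ->
  hom (p + q + r).+1 (jacobiator p.+1 q.+1 r.+1 x y z).
Proof.
move=> hx hy hz; rewrite jacobiatorSSSE -scaleN1r addrC.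
by apply: uhom_lincomb; [|rewrite addrC; apply: uhom_lincomb]; uhom_ubr_tac.
Qed.

Lemma jacobiator_recursion p q r (x y z u : TT) :
  hom p.+1 x -> hom q.+1 y -> hom r.+1 z -> hom 0 u ->
  br (p + q + r).+1 0 (jacobiator p.+1 q.+1 r.+1 x y z) u =
  jacobiator p.+1 q.+1 r x y (br r.+1 0 z u)
  + sgn K r *: jacobiator p.+1 q r.+1 x (br q.+1 0 y u) z
  + sgn K (q + r) *: jacobiator p q.+1 r.+1 (br p.+1 0 x u) y z.
Proof.
move=> hx hy hz hu; rewrite jacobiatorSSSE ubrBl // ubrDl // ubrZl //.
rewrite (@ubr_recursion _ p (q + r)) ?addnA //; last uhom_ubr_tac.
rewrite (@ubr_recursion _ q (p + r)); [|lia|uhom_ubr_tac|uhom_ubr_tac].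
rewrite (@ubr_recursion _ (p + q) r) //; last uhom_ubr_tac.
rewrite (@ubr_recursion _ q r) // (@ubr_recursion _ p r) // (@ubr_recursion _ p q) //.
rewrite !ubrDr // !ubrZr // !ubrDl // !ubrZl //.
rewrite /jacobiator !addSn !addnS /=.
by apply: lincomb_regroup3; sign_ring.
Qed.

Lemma uhom_ev_eq0 p (w : TT) : hom p.+2 w -> (forall u, ev p.+1 w u = 0) -> w = 0.
Proof.
case=> w1 w2 _ hev; apply: T_ext => // [[|u s]]; first exact: w2.
exact: (congr1 (fun t : TT => t.2 s) (hev u)).
Qed.

Lemma jacobiator111 (x y z : TT) : hom 1 x -> hom 1 y -> hom 1 z ->
  jacobiator 1 1 1 x y z = 0.
Proof.
move=> hx hy hz; have [j1 j2 _] := uhom_jacobiator hx hy hz.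
apply: T_ext => // [[|u s]]; last exact: j2.
rewrite jacobiatorSSSE -scaleN1r !addTE !scaleTE /ubr /= /sgn expr0 !scaleN1r.
by rewrite lb_jacobi subrr.
Qed.

Lemma jacobiatorSSS_eq0 d : forall p q r (x y z : TT), (p + q + r)%N = d ->
  hom p.+1 x -> hom q.+1 y -> hom r.+1 z -> jacobiator p.+1 q.+1 r.+1 x y z = 0.
Proof.
elim: d => [|d IH] p q r x y z hd hx hy hz.
  move: hx hy hz; have [-> [-> ->]] : (p = 0 /\ q = 0 /\ r = 0)%N by lia.
  exact: jacobiator111.
apply: (@uhom_ev_eq0 d); first by rewrite -hd; apply: uhom_jacobiator.
move=> u; pose U : TT := (u, fun _ => 0).
have hU : hom 0 U by [].
rewrite -[ev _ _ _]/(br (d.+1).+1 0 _ U) -hd jacobiator_recursion //.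
have -> : jacobiator p.+1 q.+1 r x y (br r.+1 0 z U) = 0.
  case: r hz hd => [|r] hz hd; first exact: jacobiator_SS0.
  by apply: IH; [lia | | | apply: uhom_ev].
have -> : jacobiator p.+1 q r.+1 x (br q.+1 0 y U) z = 0.
  case: q hy hd => [|q] hy hd; first exact: jacobiator_S0S.
  by apply: IH; [lia | | apply: uhom_ev |].
have -> : jacobiator p q.+1 r.+1 (br p.+1 0 x U) y z = 0.
  case: p hx hd => [|p] hx hd; first exact: jacobiator_0SS.
  by apply: IH; [lia | apply: uhom_ev | |].
by rewrite !scaler0 !addr0.
Qed.

Lemma jacobiator_eq0 n m k (x y z : TT) :
  (1 <= n + m)%N -> (1 <= m + k)%N -> (1 <= n + k)%N ->
  hom n x -> hom m y -> hom k z -> jacobiator n m k x y z = 0.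
Proof.
case: n => [|p]; case: m => [|q]; case: k => [|r] //= _ _ _ hx hy hz.
- exact: jacobiator_0SS.
- exact: jacobiator_S0S.
- exact: jacobiator_SS0.
- exact: jacobiatorSSS_eq0.
Qed.

Theorem ubr_semilocal_lie_superalgebra :
  semilocal_lie_superalgebra (@tzero K G V) (@tadd K G V) (@tscale K G V) hom br.
Proof.
split; first exact: uhom0.
split; first by move=> n c x y; apply: uhom_lincomb.
split; first by move=> n m x y hnm; apply: uhom_ubr.
split; first by move=> n m c x1 x2 y _ _ _ hy; apply: ubr_linearl.
split; first by move=> n m c x y1 y2 _ hx _ _; apply: ubr_linearr.
split; first by move=> n m x y _ _ _; apply: ubr_antisym.
move=> n m k x y z hnm hmk hnk _ hx hy hz.
by apply/subr0_eq; apply: jacobiator_eq0.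
Qed.

Lemma ev_ubr12 (x phi : TT) u : hom 1 x -> hom 2 phi ->
  ev 1 (br 1 2 x phi) u = br 1 1 x (ev 1 phi u) - ev 1 phi (act (x.2 [::]) u).
Proof.
move=> hx hphi.
rewrite -[ev _ _ _]/(br 2 0 _ (u, fun _ => 0)) ubr_recursion // ubr0S scalerA.
by rewrite -scaleN1r; congr (_ + _ *: _); sign_ring.
Qed.

End Construction.

Theorem proposition4p6 (K : numFieldType) (G V : lmodType K)
    (lb : G -> G -> G) (act : G -> V -> V) :
  lie_algebra lb -> lie_module lb act ->
  semilocal_lie_superalgebra (@tzero K G V) (@tadd K G V) (@tscale K G V)
    (@uhom K G V) (ubr lb act) /\
  (forall (x phi : T G V) (u : V), uhom 1 x -> uhom 2 phi ->
     ev act 1 (ubr lb act 1 2 x phi) u =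
     tadd (ubr lb act 1 1 x (ev act 1 phi u))
          (tscale (-1) (ev act 1 phi (act (x.2 [::]) u)))).
Proof.
move=> lb_lie act_module; split; first exact: ubr_semilocal_lie_superalgebra.
by move=> x phi u hx hphi; rewrite ev_ubr12 // -scaleN1r.
Qed.
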